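(* Let $R$ be a relation with $n$ tuples, and let $\mathcal{R}$ be the output of the following recursive procedure $\textsc{Partition}(R,\mathcal{S})$ run with $\mathcal{S}=\mathcal{P}(\mathrm{vars}(R))$ ordered by increasing cardinality: if $\mathcal{S}=\emptyset$, return $\{R\}$; otherwise let $U$ be the first set in $\mathcal{S}$, for each $i\in\{1,\dots,\lceil\log n\rceil\}$ let $R^i$ be the set of tuples $t\in R$ such that $\deg_R(U=\pi_U t)\in[2^{i-1},2^i]$, and return $\bigcup_i \textsc{Partition}(R^i,\mathcal{S}\setminus\{U\})$. Then (1) $|\mathcal{R}|\le \log^{|\mathcal{P}(\mathrm{vars}(R))|} n$; (2) every instance $T\in\mathcal{R}$ satisfies a constraint set $\sigma_T$ with $\sigma_T(\emptyset)=n$ and $\sigma_T(\mathrm{vars}(R))=1$.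
   Context: For a relation $R$ and $X,Y\subseteq\mathrm{vars}(R)$ and a tuple $\mathbf{y}$ over $Y$, $\deg_R(X\mid Y=\mathbf{y})=|\pi_X(\sigma_{Y=\mathbf{y}}R)|$ and $\deg_R(X\mid Y)=\max_{\mathbf{y}}\deg_R(X\mid Y=\mathbf{y})$; the shorthand $\deg_R(U=u)$ means $\deg_R(\mathrm{vars}(R)\mid U=u)$, the number of tuples of $R$ with $U$-value $u$. In each recursive call degrees are computed in the current (sub)relation. A constraint set for $R$ is a function $\sigma:\mathcal{P}(\mathrm{vars}(R))\to\mathbb{R}_{\ge0}$, and $R$ satisfies $\sigma$ if $\deg_R(Y\mid X)\le 2\sigma(X)/\sigma(Y)$ for all $X\subseteq Y\subseteq\mathrm{vars}(R)$. Empty parts are discarded. *)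

From HB Require Import structures.
From mathcomp Require Import all_boot all_order all_algebra.
Set Implicit Arguments. Unset Strict Implicit. Unset Printing Implicit Defensive.
Import Order.TTheory GRing.Theory Num.Theory.

(* A relation over the finite variable set V (= vars(R)) with values in D:
   a finite set of tuples t : V -> D. *)
Section Rel.
Variables (V D : finType).

Definition tup := {ffun V -> D}.

Definition proj (X : {set V}) (t : tup) : {ffun V -> option D} :=
  [ffun v => if v \in X then Some (t v) else None].

Definition deg_at (R : {set tup}) (X Y : {set V}) (s : tup) : nat :=
  #|[set proj X t | t in [set t in R | proj Y t == proj Y s]]|.

(* deg_R(X | Y) = max over Y-values y (values not occurring give 0). *)
Definition deg (R : {set tup}) (X Y : {set V}) : nat :=
  \max_(s in R) deg_at R X Y s.

Definition degU (R : {set tup}) (U : {set V}) (s : tup) : nat :=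
  deg_at R [set: V] U s.

Definition bucket (R : {set tup}) (U : {set V}) (i : nat) : {set tup} :=
  [set t in R | (2 ^ i.-1 <= degU R U t <= 2 ^ i)%N].

(* PARTITION(R, S); n is the number of tuples of the input relation,
   buckets i = 1 .. ceil(log2 n) (= up_log 2 n); empty parts discarded. *)
Fixpoint PARTITION (n : nat) (R : {set tup}) (S : seq {set V})
  : seq {set tup} :=
  match S with
  | [::] => [:: R]
  | U :: S' =>
      flatten [seq PARTITION n (bucket R U i) S'
              | i <- iota 1 (up_log 2 n) & bucket R U i != set0]
  end.

Definition satisfies (F : realFieldType) (R : {set tup})
  (sigma : {set V} -> F) : Prop :=
  forall X Y : {set V}, X \subset Y ->
    ((deg R Y X)%:R <= 2 * sigma X / sigma Y)%R.

End Rel.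

From HB Require Import structures.
From mathcomp Require Import all_boot all_order all_algebra.
Import Order.TTheory GRing.Theory Num.Theory.
Set Implicit Arguments. Unset Strict Implicit. Unset Printing Implicit Defensive.

(* Following the recursion down to an output part T, every U gets an intermediate
   relation A_U containing T in which all U-fibers have size in [2^(e_U - 1), 2^e_U];
   since smaller sets are processed first, A_W is contained in A_U whenever |U| < |W|.
   Take sigma(X) = 2^e_X (and n, 1 at the empty and the full set).  For X strictly
   inside Y and s in T, the distinct Y-values of T above pi_X s have disjoint Y-fibers
   in A_Y, each of size at least 2^(e_Y - 1) = sigma(Y)/2, and all of them lie in the
   X-fiber of s in A_X, of size at most sigma(X).  Hence deg_T(Y | X) <= 2 sigma(X) / sigma(Y).
   The count bound holds because each recursion level branches at most ceil(log n) times. *)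

Section Fibers.
Variables (V D : finType).
Implicit Types (R T A : {set tup V D}) (X Y U : {set V}) (s t : tup V D).

Definition fiber R U s : {set tup V D} := [set t in R | proj U t == proj U s].

Lemma proj_subset X Y s t : X \subset Y -> proj Y s = proj Y t -> proj X s = proj X t.
Proof.
move=> sXY /ffunP eqY; apply/ffunP=> v; rewrite !ffunE.
by case: ifP => // vX; have := eqY v; rewrite !ffunE (subsetP sXY _ vX) => -[->].
Qed.

Lemma proj_setT_inj : injective (@proj V D [set: V]).
Proof.
move=> s t /ffunP eqT; apply/ffunP=> v.
by have := eqT v; rewrite !ffunE in_setT => -[].
Qed.

Lemma fiber_sub R U s : fiber R U s \subset R.
Proof. by apply/subsetP=> t; rewrite inE => /andP[]. Qed.

Lemma fiberS R R' U s : R \subset R' -> fiber R U s \subset fiber R' U s.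
Proof.
by move=> sRR'; apply/subsetP=> t; rewrite !inE => /andP[/(subsetP sRR') -> ->].
Qed.

Lemma fiber_eq R U s t : proj U s = proj U t -> fiber R U s = fiber R U t.
Proof. by rewrite /fiber => ->. Qed.

Lemma degU_card_fiber R U s : degU R U s = #|fiber R U s|.
Proof. exact/card_imset/proj_setT_inj. Qed.

(* A bucket is a union of whole U-fibers, since all tuples of a fiber have the same degree. *)
Lemma fiber_bucket R U i t : t \in bucket R U i -> fiber (bucket R U i) U t = fiber R U t.
Proof.
rewrite inE => /andP[_ degt]; apply/setP=> x; rewrite !inE.
case: (eqVneq (proj U x) (proj U t)) => [eqUx|]; rewrite ?andbF ?andbT //.
by rewrite andb_idr // => _; rewrite !degU_card_fiber (fiber_eq _ eqUx) -degU_card_fiber.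
Qed.

Lemma deg_at_le_card_fiber T X Y s : deg_at T Y X s <= #|fiber T X s|.
Proof. exact: leq_imset_card. Qed.

Lemma deg_at_diag_le1 T X s : deg_at T X X s <= 1.
Proof.
rewrite /deg_at -(cards1 (proj X s)); apply/subset_leq_card/subsetP=> y.
by case/imsetP=> t; rewrite !inE => /andP[_ /eqP ->] ->.
Qed.

Lemma deg_at_mul_le T A X Y L s : X \subset Y -> T \subset A ->
  {in A, forall t, L <= #|fiber A Y t|} -> deg_at T Y X s * L <= #|fiber A X s|.
Proof.
move=> sXY sTA lowA.
have sTXA : fiber T X s \subset fiber A X s by apply: fiberS.
rewrite -sum1_card (partition_big_imset (proj Y)) /=.
rewrite (big_setID (proj Y @: fiber T X s)) (setIidPr (imsetS _ sTXA)) /=.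
rewrite -sum_nat_const (leq_trans _ (leq_addr _ _)) //; apply: leq_sum => y.
case/imsetP=> t tTX ->; rewrite sum1dep_card.
move: (tTX); rewrite inE => /andP[tT /eqP eqXt]; have tA := subsetP sTA _ tT.
apply: leq_trans (lowA t tA) (subset_leq_card _); apply/subsetP=> x.
rewrite !inE => /andP[xA /eqP eqYx]; rewrite xA eqYx eqxx andbT /= -eqXt.
exact/eqP/(proj_subset sXY eqYx).
Qed.

Lemma card_novars_le1 R : [set: V] = set0 -> #|R| <= 1.
Proof.
move=> V0; apply: leq_trans (max_card R) _.
by rewrite card_ffun -[#|V|]cardsT V0 cards0.
Qed.

End Fibers.

Section Partition.
Variables (V D : finType).
Implicit Types (R T : {set tup V D}) (U W : {set V}) (S : seq {set V}).

(* A U is the relation the recursion had reached right after splitting on U, and e U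
   the index of the bucket it lies in. *)
Definition layering R T S (A : {set V} -> {set tup V D}) (e : {set V} -> nat) :=
  forall U, U \in S ->
  [/\ T \subset A U, A U \subset R,
      {in A U, forall t, 2 ^ (e U).-1 <= #|fiber (A U) U t| <= 2 ^ e U}
    & forall W, W \in S -> #|U| < #|W| -> A W \subset A U].

Lemma bucket_sub R U i : bucket R U i \subset R.
Proof. by apply/subsetP=> t; rewrite inE => /andP[]. Qed.

Lemma mem_PARTITION_cons n R U S T : T \in PARTITION n R (U :: S) ->
  exists2 i, 0 < i <= up_log 2 n & T \in PARTITION n (bucket R U i) S.
Proof.
case/flattenP=> P /mapP[i]; rewrite mem_filter mem_iota add1n ltnS => /andP[_ rangei] ->.
by exists i.
Qed.

Lemma PARTITION_sub n R S T : T \in PARTITION n R S -> T \subset R.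
Proof.
elim: S R => [|U S IH] R /=; first by rewrite inE => /eqP ->.
case/mem_PARTITION_cons=> i _ /IH /subset_trans; apply; exact: bucket_sub.
Qed.

Lemma PARTITION_card_gt1 n R S T : S != [::] -> T \in PARTITION n R S -> 1 < n.
Proof.
case: S => // U S _ /mem_PARTITION_cons[i /andP[i_gt0 le_i_log] _].
by have := leq_trans i_gt0 le_i_log; rewrite up_log_gt0.
Qed.

Lemma layering_cons R T U S i :
  {in S, forall W, #|U| <= #|W|} -> T \subset bucket R U i ->
  (exists A e, layering (bucket R U i) T S A e) ->
  exists A e, layering R T (U :: S) A e.
Proof.
move=> minU sTB [A [e layA]].
exists (fun W => if W \in S then A W else bucket R U i).
exists (fun W => if W \in S then e W else i).
have memUS W : W \in U :: S -> W \notin S -> W = U.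
  by rewrite inE => /orP[/eqP -> //| ->].
move=> W WUS; case: ifP => [WS | /negbT/(memUS _ WUS) ->].
  have [sTA sAB fibA nestA] := layA W WS; split=> //.
    exact: subset_trans sAB (bucket_sub _ _ _).
  move=> W' W'US; case: ifP => [W'S | /negbT/(memUS _ W'US) ->]; first exact: nestA.
  by rewrite ltnNge minU.
split=> //; first exact: bucket_sub.
  by move=> t Bt; rewrite fiber_bucket // -degU_card_fiber; case/setIdP: Bt.
move=> W' W'US; case: ifP => [W'S _ | /negbT/(memUS _ W'US) ->]; last by rewrite ltnn.
by have [_ ? _ _] := layA W' W'S.
Qed.

Lemma PARTITION_layering n R S T :
  sorted (fun A B : {set V} => #|A| <= #|B|) S -> T \in PARTITION n R S ->
  exists A e, layering R T S A e.
Proof.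
elim: S R => [|U S IH] R sortS /=.
  by rewrite inE => /eqP ->; exists (fun=> R), (fun=> 0).
have leq_card_trans : transitive (fun A B : {set V} => #|A| <= #|B|).
  by move=> B A C; apply: leq_trans.
have /allP minU := order_path_min leq_card_trans sortS.
case/mem_PARTITION_cons=> i _ TP; apply: layering_cons (minU) _ _.
  exact: PARTITION_sub TP.
exact: IH (path_sorted sortS) TP.
Qed.

Lemma size_PARTITION n R S : size (PARTITION n R S) <= up_log 2 n ^ size S.
Proof.
elim: S R => [|U S IH] R //=; rewrite size_flatten /shape -map_comp expnS.
set idx := [seq i <- _ | _]; have: size idx <= up_log 2 n.
  by rewrite size_filter (leq_trans (count_size _ _)) ?size_iota.
move=> size_idx; apply: leq_trans (leq_mul size_idx (leqnn _)).
elim: idx {size_idx} => //= i idx IHidx; rewrite mulSn leq_add //; exact: IH.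
Qed.

End Partition.

Section Constraint.
Variables (V D : finType) (R T : {set tup V D}) (S : seq {set V}).
Variables (A : {set V} -> {set tup V D}) (e : {set V} -> nat).
Hypotheses (layA : layering R T S A e) (memS : forall U, U \in S) (R_gt0 : 0 < #|R|).
Implicit Types (X Y : {set V}) (s : tup V D).

Definition sigma_nat X := if X == set0 then #|R| else if X == setT then 1 else 2 ^ e X.

Lemma sigma_nat_gt0 X : 0 < sigma_nat X.
Proof. by rewrite /sigma_nat; case: ifP => // _; case: ifP => // _; rewrite expn_gt0. Qed.

Lemma fiber_le_sigma_nat X s : X != setT -> s \in T -> #|fiber (A X) X s| <= sigma_nat X.
Proof.
move=> /negbTE XnT sT; have [sTA sAR fibA _] := layA (memS X).
rewrite /sigma_nat XnT; case: ifP => _.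
  exact: leq_trans (subset_leq_card (fiber_sub _ _ _)) (subset_leq_card sAR).
by case/andP: (fibA s (subsetP sTA s sT)).
Qed.

Lemma deg_at_mul_sigma_nat X Y s : X \subset Y -> s \in T ->
  deg_at T Y X s * sigma_nat Y <= 2 * sigma_nat X.
Proof.
move=> sXY sT; have [<-|XnY] := eqVneq X Y.
  by rewrite leq_mul2r (leq_trans (deg_at_diag_le1 T X s)) ?orbT.
have ltXY : #|X| < #|Y| by rewrite proper_card // properEneq XnY.
have XnT : X != setT by apply: contraNneq XnY => XT; rewrite eqEsubset sXY XT subsetT.
have Yn0 : Y != set0 by apply: contraNneq XnY => Y0; rewrite Y0 -subset0 -Y0.
have [sTAX _ _ nestX] := layA (memS X); have [sTAY _ fibY _] := layA (memS Y).
have [YT | YnT] := eqVneq Y setT.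
  rewrite {1}/sigma_nat (negbTE Yn0) YT eqxx muln1.
  apply: leq_trans (deg_at_le_card_fiber _ _ _ _) _.
  apply: leq_trans (subset_leq_card (fiberS _ _ sTAX)) _.
  exact: leq_trans (fiber_le_sigma_nat XnT sT) (leq_pmull _ (isT : 0 < 2)).
rewrite {1}/sigma_nat (negbTE Yn0) (negbTE YnT).
have low_fiberY : {in A Y, forall t, 2 ^ (e Y).-1 <= #|fiber (A Y) Y t|}.
  by move=> t /fibY /andP[].
have := deg_at_mul_le s sXY sTAY low_fiberY.
move/leq_trans/(_ (subset_leq_card (fiberS _ _ (nestX Y (memS Y) ltXY)))).
move/leq_trans/(_ (fiber_le_sigma_nat XnT sT)).
rewrite -(leq_pmul2l (isT : 0 < 2)); apply: leq_trans.
by rewrite mulnCA leq_mul //; case: (e Y) => // k; rewrite expnS.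
Qed.

Lemma satisfies_sigma_nat (F : realFieldType) :
  satisfies T (fun X => (sigma_nat X)%:R : F)%R.
Proof.
move=> X Y sXY; rewrite ler_pdivlMr ?ltr0n ?sigma_nat_gt0 // -!natrM ler_nat /deg.
apply: (big_ind (fun m => m * sigma_nat Y <= 2 * sigma_nat X)) => //.
  by move=> m1 m2 le1 le2; rewrite maxnMl geq_max le1 le2.
by move=> s sT; apply: deg_at_mul_sigma_nat.
Qed.

End Constraint.

Theorem lemma4p3 (F : realFieldType) (V D : finType) (R : {set tup V D})
  (S : seq {set V}) :
  perm_eq S (enum [set: {set V}]) ->
  sorted (fun A B : {set V} => #|A| <= #|B|) S ->
  let n := #|R| in
  let Rs := PARTITION n R S in
  (#|[set T : {set tup V D} | T \in Rs]| <= (up_log 2 n) ^ #|[set: {set V}]|)%N /\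
  (forall T, T \in Rs ->
     exists sigma : {set V} -> F,
       (forall Y, (0 <= sigma Y)%R) /\
       sigma set0 = (n%:R)%R /\ sigma [set: V] = 1%R /\
       satisfies T sigma).
Proof.
move=> permS sortS n Rs.
have memS U : U \in S by rewrite (perm_mem permS) mem_enum in_setT.
split.
  rewrite [#|[set: {set V}]|]cardE -(perm_size permS) cardsE.
  exact: leq_trans (card_size _) (size_PARTITION _ _ _).
move=> T TRs.
have n_gt1 : 1 < n by apply: PARTITION_card_gt1 TRs; apply: contraTneq (memS set0) => ->.
have VTn0 : [set: V] != set0.
  by apply: contraTneq n_gt1 => /(card_novars_le1 R); rewrite -leqNgt.
have [A [e layA]] := PARTITION_layering sortS TRs.
exists (fun X => (sigma_nat R e X)%:R)%R.
split; first by move=> Y; apply: ler0n.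
split; first by rewrite /sigma_nat eqxx.
split; first by rewrite /sigma_nat (negbTE VTn0) eqxx.
exact: (satisfies_sigma_nat layA memS (ltnW n_gt1) F).
Qed.
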